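(* For every finite graph $G$, the poset $\mathrm{X}(G)$ deformation retracts (on geometric realisations) onto its subposet $\mathrm{C}(G)$.
   Context: Graphs are finite and may have loops and multiple edges. Subgraphs are edge-induced (no isolated vertices), so a subgraph is identified with a subset of $E(G)$. A core subgraph of $G$ is a proper subgraph $H$ such that each connected component of $H$ has non-trivial fundamental group and no vertex of $H$ has valence one in $H$ (separating edges are allowed). $\mathrm{X}(G)$ is the poset, under inclusion, of proper non-empty subgraphs of $G$ at least one connected component of which has non-trivial fundamental group; $\mathrm{C}(G)$ is the poset of proper core subgraphs of $G$ under inclusion. *)

From mathcomp Require Import all_boot.
From Stdlib Require Import Reals.

Set Implicit Arguments.
Unset Strict Implicit.
Unset Printing Implicit Defensive.

Section Graphs.

(* A finite graph: vertex type V, edge type E, each edge has two (unordered)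
   endpoints; loops (equal endpoints) and multiple edges are allowed. *)
Variables (V E : finType) (ends : E -> V * V).

Definition incident (e : E) (v : V) : bool :=
  ((ends e).1 == v) || ((ends e).2 == v).

(* Subgraphs are edge-induced: a subgraph is a subset H of E(G). *)
Definition adjH (H : {set E}) : rel V := fun u w =>
  [exists e in H, (((ends e).1 == u) && ((ends e).2 == w))
                  || (((ends e).1 == w) && ((ends e).2 == u))].

Definition vertsH (H : {set E}) : {set V} := [set v | [exists e in H, incident e v]].

Definition comp_verts (H : {set E}) (v : V) : {set V} :=
  [set w | connect (adjH H) v w].
Definition comp_edges (H : {set E}) (v : V) : {set E} :=
  [set e in H | (ends e).1 \in comp_verts H v].

(* A connected graph has non-trivial fundamental group (free of rank
   #edges - #vertices + 1) iff #vertices <= #edges. *)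
Definition comp_nontrivial (H : {set E}) (v : V) : bool :=
  #|comp_verts H v| <= #|comp_edges H v|.

(* valence of v in H; a loop contributes 2 *)
Definition valence (H : {set E}) (v : V) : nat :=
  \sum_(e in H) (((ends e).1 == v) + ((ends e).2 == v)).

Definition proper_subgraph (H : {set E}) : bool := H \proper [set: E].

Definition inX (H : {set E}) : bool :=
  [&& proper_subgraph H, H != set0 & [exists v in vertsH H, comp_nontrivial H v]].

Definition is_core (H : {set E}) : bool :=
  proper_subgraph H &&
  [forall v in vertsH H, comp_nontrivial H v && (valence H v != 1)].

Definition inC (H : {set E}) : bool := is_core H && (H != set0).

(* ---- geometric realisation of (the order complex of) a subposet P of
   ({set E}, \subset), embedded in R^{set E}: points are weight functions
   p >= 0 summing to 1 whose support lies in P and is a chain. ---- *)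

Definition Rsum (p : {set E} -> R) : R := \big[Rplus/0%R]_(S : {set E}) p S.

Definition in_real (P : pred {set E}) (p : {set E} -> R) : Prop :=
  (forall S, (0 <= p S)%R) /\ Rsum p = 1%R /\
  (forall S, (0 < p S)%R -> P S) /\
  (forall S T, (0 < p S)%R -> (0 < p T)%R -> S \subset T \/ T \subset S).

(* sup-distance on R^{set E} (induces the topology of the realisation) *)
Definition Rdist (p q : {set E} -> R) : R :=
  \big[Rmax/0%R]_(S : {set E}) Rabs (p S - q S).

(* |Q| is a (strong) deformation retract of |P|: a homotopy
   F : |P| x [0,1] -> |P|, continuous, with F(-,0) = id, F(-,1) in |Q|,
   and F(q,t) = q for q in |Q|. *)
Definition deformation_retracts_onto (P Q : pred {set E}) : Prop :=
  exists F : ({set E} -> R) -> R -> ({set E} -> R),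
    (forall p t, in_real P p -> (0 <= t <= 1)%R -> in_real P (F p t)) /\
    (forall p, in_real P p -> forall S, F p 0%R S = p S) /\
    (forall p, in_real P p -> in_real Q (F p 1%R)) /\
    (forall q t, in_real Q q -> (0 <= t <= 1)%R -> forall S, F q t S = q S) /\
    (forall p t, in_real P p -> (0 <= t <= 1)%R ->
       forall eps, (0 < eps)%R -> exists delta, (0 < delta)%R /\
         forall q s, in_real P q -> (0 <= s <= 1)%R ->
           (Rdist p q < delta)%R -> (Rabs (t - s) < delta)%R ->
           (Rdist (F p t) (F q s) < eps)%R).

End Graphs.

(* Sending H in X(G) to its core, the union of the core subgraphs contained in
   H, is a monotone map into C(G) that shrinks subgraphs and fixes C(G).  The
   core is non-empty: a component with at least as many edges as vertices keeps
   that property when a pendant edge is pruned, so pruning ends in a non-empty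
   leafless subgraph.  It has no leaves since each of its vertices has valence
   at least 2 in one of the cores it contains.  Any such shrinking retraction
   r induces a strong deformation retraction of the order complexes. *)

From Pilot Require Import Defs.
From mathcomp Require Import all_boot.
From Stdlib Require Import Reals Lra.
From mathcomp Require Import Rstruct.

Set Implicit Arguments.
Unset Strict Implicit.
Unset Printing Implicit Defensive.

Lemma sum_eq_mem (T : finType) (A : {set T}) (x : T) :
  \sum_(y in A) ((x == y) : nat) = (x \in A).
Proof.
have [xA|xNA] := boolP (x \in A).
  rewrite (bigD1 x) //= eqxx big1 // => y /andP[_ /negbTE].
  by rewrite eq_sym => ->.
by rewrite big1 // => y yA; case: eqP => // xy; rewrite xy yA in xNA.
Qed.

Section Cores.

Variables (V E : finType) (ends : E -> V * V).
Implicit Types (H K L : {set E}) (e : E) (u v w : V).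

Lemma incident_ends e : incident ends e (ends e).1 && incident ends e (ends e).2.
Proof. by rewrite /incident !eqxx orbT. Qed.

Lemma vertsH_incident H e v : e \in H -> incident ends e v -> v \in vertsH ends H.
Proof. by move=> eH ev; rewrite inE; apply/existsP; exists e; rewrite eH. Qed.

Lemma adjH_sym H : symmetric (adjH ends H).
Proof.
move=> u w; apply/existsP/existsP => -[e /andP[eH euw]]; exists e;
  by rewrite eH orbC.
Qed.

Lemma adjH_ends H e : e \in H -> adjH ends H (ends e).1 (ends e).2.
Proof. by move=> eH; apply/existsP; exists e; rewrite eH !eqxx. Qed.

Lemma connect_vertsH H v w : v \in vertsH ends H ->
  connect (adjH ends H) v w -> w \in vertsH ends H.
Proof.
move=> vH /closed_connect <- // x y /existsP[e /andP[eH exy]].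
case/andP: (incident_ends e) => /(vertsH_incident eH) e1 /(vertsH_incident eH) e2.
by case/orP: exy => /andP[/eqP <- /eqP <-]; rewrite e1 e2.
Qed.

Lemma valence_gt0 H v : v \in vertsH ends H -> 0 < valence ends H v.
Proof.
rewrite inE => /existsP[e /andP[eH ev]]; rewrite /valence (bigD1 e) //=.
by apply: ltn_addr; case/orP: ev => ->; rewrite ?addn1.
Qed.

Lemma valence_subset K H v : K \subset H -> valence ends K v <= valence ends H v.
Proof. by move=> sKH; rewrite /valence [X in _ <= X](big_setID K) (setIidPr sKH) leq_addr. Qed.

Lemma sum_valence_comp H v :
  \sum_(w in comp_verts ends H v) valence ends H w = 2 * #|comp_edges ends H v|.
Proof.
set W := comp_verts ends H v.
have W_ends e : e \in H -> ((ends e).2 \in W) = ((ends e).1 \in W).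
  move=> eH; rewrite !inE; apply/esym/same_connect_r/connect1/adjH_ends => //.
  exact/sym_connect_sym/adjH_sym.
rewrite /valence exchange_big /= (eq_bigr (fun e => 2 * ((ends e).1 \in W))).
  rewrite -big_distrr /= -sum1_card; congr (2 * _).
  rewrite big_mkcond [RHS]big_mkcond; apply: eq_bigr => e _.
  by rewrite !inE; case: (e \in H); case: connect.
by move=> e eH; rewrite big_split /= !sum_eq_mem W_ends // addnn -mul2n.
Qed.

Definition leafless H : bool := [forall v in vertsH ends H, valence ends H v != 1].

Lemma leafless_comp_nontrivial H v :
  leafless H -> v \in vertsH ends H -> comp_nontrivial ends H v.
Proof.
move=> /forall_inP lfH vH; rewrite /comp_nontrivial -(leq_pmul2l (isT : 0 < 2)).
rewrite -sum_valence_comp mulnC -sum_nat_const leq_sum // => w.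
rewrite inE => /(connect_vertsH vH) wH.
by move: (valence_gt0 wH) (lfH w wH); case: (valence ends H w) => [|[|]].
Qed.

Lemma is_coreE H : is_core ends H = proper_subgraph H && leafless H.
Proof.
rewrite /is_core; case: (proper_subgraph H) => //=.
apply/forall_inP/forall_inP => lfH v vH; first by case/andP: (lfH v vH).
by rewrite leafless_comp_nontrivial ?lfH //; exact/forall_inP.
Qed.

Lemma pendant_edge K w : valence ends K w = 1 -> exists e,
  [/\ e \in K, vertsH ends (K :\ e) \subset vertsH ends K :\ w & 1 < #|vertsH ends K|].
Proof.
move=> /eqP /sum_nat_eq1 [e [eK ce others]]; exists e; split => //.
  apply/subsetP => x; rewrite inE => /existsP[e' /andP[]].
  rewrite in_setD1 => /andP[ne' e'K] e'x; rewrite in_setD1 (vertsH_incident e'K e'x) andbT.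
  apply: contraTneq e'x => ->; move: (others e' ne' e'K); rewrite /incident.
  by case: (_ == w); case: (_ == w).
have ends_neq : (ends e).1 != (ends e).2.
  by apply: contra_eqN ce => /eqP ->; case: (_ == w).
case/andP: (incident_ends e) => /(vertsH_incident eK) e1 /(vertsH_incident eK) e2.
apply: leq_trans (subset_leq_card (_ : [set (ends e).1; (ends e).2] \subset _)).
  by rewrite cards2 ends_neq.
by apply/subsetP => x /set2P[] ->.
Qed.

Lemma exists_leafless_subgraph K : K != set0 -> #|vertsH ends K| <= #|K| ->
  exists2 L : {set E}, L \subset K & (L != set0) && leafless L.
Proof.
elim: {K}_.+1 {-2}K (ltnSn #|K|) => // n IH K ltKn K0 cardK.
have [lfK|] := boolP (leafless K); first by exists K; rewrite ?K0.
case/forall_inPn => w wK /negPn /eqP /pendant_edge [e [eK sVK card_gt1]].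
have cardKe : #|K| = #|K :\ e|.+1 by rewrite (cardsD1 e K) eK.
have ltKen : #|K :\ e| < n by rewrite -ltnS -cardKe.
have Ke0 : K :\ e != set0.
  by rewrite -card_gt0; move: (leq_trans card_gt1 cardK); rewrite cardKe.
have cardKe_verts : #|vertsH ends (K :\ e)| <= #|K :\ e|.
  move: (subset_leq_card sVK) cardK; rewrite (cardsD1 w (vertsH ends K)) wK cardKe.
  by move=> /leq_ltn_trans h /h.
have [L sLK lfL] := IH _ ltKen Ke0 cardKe_verts.
by exists L => //; apply: subset_trans sLK (subsetDl _ _).
Qed.

Lemma inCE H : inC ends H = [&& proper_subgraph H, leafless H & H != set0].
Proof. by rewrite /inC is_coreE andbA. Qed.

Lemma inC_inX H : inC ends H -> inX ends H.
Proof.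
rewrite inCE => /and3P[pH lfH H0]; rewrite /inX pH H0 /=.
case/set0Pn: H0 => e eH; have vH := vertsH_incident eH (andP (incident_ends e)).1.
by apply/exists_inP; exists (ends e).1 => //; exact: leafless_comp_nontrivial.
Qed.

Lemma inX_exists_inC H : inX ends H -> exists2 K : {set E}, K \subset H & inC ends K.
Proof.
case/and3P => pH _ /exists_inP[v vH ntv].
set C := comp_edges ends H v.
have sCH : C \subset H by apply/subsetP => e; rewrite inE => /andP[].
have sVC : vertsH ends C \subset comp_verts ends H v.
  apply/subsetP => x; rewrite inE => /existsP[e /andP[]].
  rewrite inE => /andP[eH ve1] /orP[] /eqP <- //.
  by rewrite inE; apply: connect_trans (connect1 (adjH_ends eH)); rewrite inE in ve1.
have C0 : C != set0.
  move: vH; rewrite inE => /existsP[e /andP[eH /orP[] /eqP ev]]; apply/set0Pn; exists e;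
    by rewrite !inE eH -ev ?connect0 // connect1 // adjH_sym adjH_ends.
have [L sLC /andP[L0 lfL]] :=
  exists_leafless_subgraph C0 (leq_trans (subset_leq_card sVC) ntv).
have sLH := subset_trans sLC sCH.
by exists L; rewrite // inCE lfL L0 /= andbT; exact: sub_proper_trans sLH pH.
Qed.

Definition core H : {set E} := \bigcup_(K : {set E} | (K \subset H) && inC ends K) K.

Lemma core_sub H : core H \subset H.
Proof. by apply/bigcupsP => K /andP[]. Qed.

Lemma sub_core K H : K \subset H -> inC ends K -> K \subset core H.
Proof. by move=> sKH cK; apply: bigcup_sup; rewrite sKH cK. Qed.

Lemma core_subset K H : K \subset H -> core K \subset core H.
Proof.
by move=> sKH; apply/bigcupsP => L /andP[sLK cL]; apply: sub_core (subset_trans sLK sKH) cL.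
Qed.

Lemma core_id H : inC ends H -> core H = H.
Proof. by move=> cH; apply/eqP; rewrite eqEsubset core_sub sub_core. Qed.

Lemma core_leafless H : leafless (core H).
Proof.
apply/forall_inP => x; rewrite inE => /existsP[e /andP[/bigcupP[K /andP[sKH cK] eK] ex]].
have xK := vertsH_incident eK ex.
move: (valence_gt0 xK) (valence_subset x (sub_core sKH cK)).
rewrite inCE in cK; case/and3P: cK => _ /forall_inP /(_ x xK).
by case: (valence ends K x) => [|[|n]] //= _ _ _; case: valence => [|[|]].
Qed.

Lemma core_inC H : inX ends H -> inC ends (core H).
Proof.
move=> XH; have [K sKH cK] := inX_exists_inC XH.
have pH : proper_subgraph H by case/and3P: XH.
have pcH : proper_subgraph (core H) := sub_proper_trans (core_sub H) pH.
rewrite inCE core_leafless pcH /=.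
apply: contraTneq (sub_core sKH cK) => ->; rewrite subset0.
by rewrite inCE in cK; case/and3P: cK.
Qed.

End Cores.

Open Scope R_scope.

Section RealSums.

Variable I : finType.
Implicit Types g h : I -> R.

Lemma sumR_ge0 h : (forall i, 0 <= h i) -> 0 <= \big[Rplus/0]_i h i.
Proof. by move=> h_ge0; apply: big_ind => [|x y|]; [lra | lra |]. Qed.

Lemma sumR_le g h : (forall i, g i <= h i) ->
  \big[Rplus/0]_i g i <= \big[Rplus/0]_i h i.
Proof. by move=> gh; apply: big_ind2 => [|*|]; [lra | lra |]. Qed.

Lemma sumR_gt0_exists h : 0 < \big[Rplus/0]_i h i -> exists i, 0 < h i.
Proof.
apply: (big_ind (fun x => 0 < x -> exists i, 0 < h i)) => [|x y IHx IHy xy|i _ hi].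
- lra.
- by case: (Rlt_le_dec 0 x) => [/IHx //|x_le0]; apply: IHy; lra.
- by exists i.
Qed.

Lemma sumR_sub g h :
  \big[Rplus/0]_i g i - \big[Rplus/0]_i h i = \big[Rplus/0]_i (g i - h i).
Proof. by apply: (big_ind3 (fun x y z => x - y = z)) => [|*|]; [lra | lra |]. Qed.

Lemma Rabs_sumR_le h c : (forall i, Rabs (h i) <= c) ->
  Rabs (\big[Rplus/0]_i h i) <= c * \big[Rplus/0]_(i : I) 1.
Proof.
move=> hc; apply: (big_ind2 (fun x y => Rabs x <= c * y)) => [|x1 y1 x2 y2 h1 h2|i _].
- rewrite Rabs_R0; lra.
- have := Rabs_triang x1 x2; lra.
- have := hc i; lra.
Qed.

End RealSums.

Lemma Rmin_lipschitz a b a' b' :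
  Rabs (Rmin a b - Rmin a' b') <= Rabs (a - a') + Rabs (b - b').
Proof. by unfold Rmin; repeat destruct Rle_dec; split_Rabs; lra. Qed.

Lemma Rmax_lipschitz a b a' b' :
  Rabs (Rmax a b - Rmax a' b') <= Rabs (a - a') + Rabs (b - b').
Proof. by unfold Rmax; repeat destruct Rle_dec; split_Rabs; lra. Qed.

Section SupDistance.

Variable E : finType.
Implicit Types (p q : {set E} -> R) (S : {set E}).

Lemma Rdist_ge p q S : Rabs (p S - q S) <= Defs.Rdist p q.
Proof.
rewrite /Defs.Rdist; elim: (index_enum _) (mem_index_enum S) => // T r IH.
rewrite big_cons inE => /orP[/eqP <-|/IH]; first exact: Rmax_l.
by move/Rle_trans; apply; apply: Rmax_r.
Qed.

Lemma Rdist_ge0 p q : 0 <= Defs.Rdist p q.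
Proof. exact: Rle_trans (Rabs_pos (p set0 - q set0)) (Rdist_ge p q set0). Qed.

Lemma Rdist_le p q c : 0 <= c -> (forall S, Rabs (p S - q S) <= c) ->
  Defs.Rdist p q <= c.
Proof. by move=> c_ge0 pq; apply: (big_ind (fun x => x <= c)) => // x y; apply: Rmax_lub. Qed.

End SupDistance.

Section Deflation.

Variables (E : finType) (f : {set E} -> {set E}) (P Q : pred {set E}).
Implicit Types (p q : {set E} -> R) (S T : {set E}).
Hypotheses (f_sub : forall S, f S \subset S)
  (f_subset : forall S T, S \subset T -> f S \subset f T)
  (f_PQ : forall S, P S -> Q (f S))
  (f_Q : forall S, Q S -> f S = S)
  (Q_P : forall S, Q S -> P S).

(* Stack the weights of a chain on [0, 1], larger sets first, so that S
   occupies [weight_above p S, weight_above p S + p S].  At time t the part of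
   this interval above level 1 - t is moved from S to f S.  A set with moved
   weight is contained in every set with kept weight, and f S is contained in
   S, so the support stays a chain. *)
Definition weight_above p S :=
  \big[Rplus/0]_(T : {set E}) (if S \proper T then p T else 0).

Definition kept p s S := Rmin (p S) (Rmax 0 (s - weight_above p S)).

Definition moved p s S := p S - kept p s S.

Definition homotopy p t T :=
  \big[Rplus/0]_(S : {set E}) (if f S == T then moved p (1 - t) S else 0) + kept p (1 - t) T.

Section NonnegativeWeights.

Variable p : {set E} -> R.
Hypothesis p_ge0 : forall S, 0 <= p S.

Lemma weight_above_ge0 S : 0 <= weight_above p S.
Proof. by apply: sumR_ge0 => T; case: ifP => _; [apply: p_ge0 | lra]. Qed.

Lemma weight_above_add_le S : weight_above p S + p S <= Rsum p.
Proof.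
rewrite /weight_above -[p S](big_pred1_eq Rplus S p) big_mkcond -big_split /=.
apply: sumR_le => T; have := p_ge0 T.
by case: eqP => [->|_]; rewrite ?properxx //; case: (S \proper T); lra.
Qed.

Lemma weight_above_proper S T : S \proper T ->
  weight_above p T + p T <= weight_above p S.
Proof.
move=> ST; rewrite /weight_above -[p T](big_pred1_eq Rplus T p) big_mkcond -big_split /=.
apply: sumR_le => W; have := p_ge0 W.
case: eqP => [->|_]; first by rewrite properxx ST; lra.
case: (boolP (T \proper W)) => [/(proper_trans ST) ->|_]; first lra.
by case: (S \proper W); lra.
Qed.

Lemma kept_ge0 s S : 0 <= kept p s S.
Proof. by have := p_ge0 S; rewrite /kept /Rmin /Rmax; repeat destruct Rle_dec; lra. Qed.

Lemma moved_ge0 s S : 0 <= moved p s S.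
Proof. by rewrite /moved /kept /Rmin; destruct Rle_dec; lra. Qed.

Lemma kept_le s S : kept p s S <= p S.
Proof. by have := moved_ge0 s S; rewrite /moved; lra. Qed.

Lemma moved_le s S : moved p s S <= p S.
Proof. by have := kept_ge0 s S; rewrite /moved; lra. Qed.

Lemma kept_proper_moved s S T : S \proper T -> 0 < moved p s T -> kept p s S = 0.
Proof.
move=> ST; have := weight_above_proper ST; have := p_ge0 S.
by rewrite /moved /kept /Rmin /Rmax; repeat destruct Rle_dec; lra.
Qed.

Lemma f_moved_sub_kept s S T :
  (0 < p S -> 0 < p T -> S \subset T \/ T \subset S) ->
  0 < moved p s S -> 0 < kept p s T -> f S \subset T.
Proof.
move=> chain mS kT; apply: subset_trans (f_sub S) _.
have [||//|TS] := chain; [have := moved_le s S | have := kept_le s T |]; try lra.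
have [/kept_proper_moved /(_ mS)|] := boolP (T \proper S); first lra.
by rewrite properE TS negbK.
Qed.

Lemma homotopy_ge0 t T : 0 <= homotopy p t T.
Proof.
have := kept_ge0 (1 - t) T; have : 0 <= \big[Rplus/0]_(S : {set E})
    (if f S == T then moved p (1 - t) S else 0).
  by apply: sumR_ge0 => S; case: ifP => _; [apply: moved_ge0 | lra].
by rewrite /homotopy; lra.
Qed.

End NonnegativeWeights.

Lemma Rsum_homotopy p t : Rsum (homotopy p t) = Rsum p.
Proof.
rewrite /Rsum /homotopy big_split /= exchange_big /= -big_split /=.
apply: eq_bigr => S _; rewrite -big_mkcond /= (big_pred1 (f S)) => [|T]; last exact: eq_sym.
by rewrite /moved; lra.
Qed.

Lemma homotopy_gt0 p t T : 0 < homotopy p t T ->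
  0 < kept p (1 - t) T \/ exists2 S, f S = T & 0 < moved p (1 - t) S.
Proof.
rewrite /homotopy => hT; have [kT|kT] := Rlt_le_dec 0 (kept p (1 - t) T); [by left | right].
have /sumR_gt0_exists [S] : 0 < \big[Rplus/0]_(S : {set E})
  (if f S == T then moved p (1 - t) S else 0) by lra.
by case: eqP => [fST mS|_]; [exists S | lra].
Qed.

Lemma homotopy_in_real p t : in_real P p -> in_real P (homotopy p t).
Proof.
case=> p_ge0 [p1 [pP chain]].
have kept_gt0 T : 0 < kept p (1 - t) T -> 0 < p T.
  by move=> kT; have := kept_le p (1 - t) T; lra.
have moved_gt0 S : 0 < moved p (1 - t) S -> 0 < p S.
  by move=> mS; have := moved_le p_ge0 (1 - t) S; lra.
split; first exact: homotopy_ge0.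
split; first by rewrite Rsum_homotopy.
split.
  by move=> T /homotopy_gt0 [/kept_gt0 /pP | [S <- /moved_gt0 /pP /f_PQ /Q_P]].
move=> T1 T2 /homotopy_gt0 [k1|[S1 <- m1]] /homotopy_gt0 [k2|[S2 <- m2]].
- exact: chain (kept_gt0 _ k1) (kept_gt0 _ k2).
- by right; have := f_moved_sub_kept p_ge0 (chain S2 T1) m2 k1.
- by left; have := f_moved_sub_kept p_ge0 (chain S1 T2) m1 k2.
- by case: (chain _ _ (moved_gt0 _ m1) (moved_gt0 _ m2)) => s12; [left|right]; apply: f_subset.
Qed.

Lemma homotopy0 p : in_real P p -> homotopy p 0 =1 p.
Proof.
case=> p_ge0 [p1 _].
have kept1 S : kept p (1 - 0) S = p S.
  have := weight_above_add_le p_ge0 S; have := p_ge0 S; rewrite p1 /kept /Rmin /Rmax.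
  by repeat destruct Rle_dec; lra.
move=> T; rewrite /homotopy kept1 big1 ?Rplus_0_l // => S _.
by case: ifP => // _; rewrite /moved kept1; lra.
Qed.

Lemma homotopy1_in_real p : in_real P p -> in_real Q (homotopy p 1).
Proof.
move=> Pp; have [h_ge0 [h1 [_ hchain]]] := homotopy_in_real 1 Pp.
case: Pp => p_ge0 [_ [pP _]].
split => //; split => //; split => // T /homotopy_gt0 [|[S <- mS]].
  have := weight_above_ge0 p_ge0 T; have := p_ge0 T.
  by rewrite /kept /Rmin /Rmax; repeat destruct Rle_dec; lra.
by apply/f_PQ/pP; have := moved_le p_ge0 (1 - 1) S; lra.
Qed.

Lemma homotopy_Q q t : in_real Q q -> homotopy q t =1 q.
Proof.
case=> q_ge0 [_ [qQ _]] T; rewrite /homotopy.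
rewrite (eq_bigr (fun S => if S == T then moved q (1 - t) S else 0)) => [|S _].
  by rewrite -big_mkcond big_pred1_eq /moved; lra.
have [mS|m_le0] := Rlt_le_dec 0 (moved q (1 - t) S).
  by rewrite f_Q //; apply: qQ; have := moved_le q_ge0 (1 - t) S; lra.
have -> : moved q (1 - t) S = 0 by have := moved_ge0 q (1 - t) S; lra.
by case: ifP; case: ifP.
Qed.

Local Notation nsets := (\big[Rplus/0]_(S : {set E}) 1).

Lemma nsets_ge0 : 0 <= nsets.
Proof. by apply: sumR_ge0 => _; lra. Qed.

Lemma weight_above_lipschitz p q S :
  Rabs (weight_above p S - weight_above q S) <= Defs.Rdist p q * nsets.
Proof.
rewrite /weight_above sumR_sub; apply: Rabs_sumR_le => T.
by case: ifP => _; rewrite ?Rminus_0_r ?Rabs_R0; [apply: Rdist_ge | apply: Rdist_ge0].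
Qed.

Lemma kept_lipschitz p q s s' S : Rabs (kept p s S - kept q s' S) <=
  Defs.Rdist p q + Rabs (s - s') + Defs.Rdist p q * nsets.
Proof.
rewrite /kept; apply: Rle_trans (Rmin_lipschitz _ _ _ _) _.
have := Rmax_lipschitz 0 (s - weight_above p S) 0 (s' - weight_above q S).
have := Rdist_ge p q S; have := weight_above_lipschitz p q S.
rewrite Rminus_0_r Rabs_R0.
set a := weight_above p S; set b := weight_above q S.
have : Rabs (s - a - (s' - b)) <= Rabs (s - s') + Rabs (a - b) by split_Rabs; lra.
lra.
Qed.

Lemma moved_lipschitz p q s s' S : Rabs (moved p s S - moved q s' S) <=
  2 * Defs.Rdist p q + Rabs (s - s') + Defs.Rdist p q * nsets.
Proof.
have := kept_lipschitz p q s s' S; have := Rdist_ge p q S; rewrite /moved.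
set a := kept p s S; set b := kept q s' S.
have : Rabs (p S - a - (q S - b)) <= Rabs (p S - q S) + Rabs (a - b) by split_Rabs; lra.
lra.
Qed.

Lemma homotopy_lipschitz p q t s : Defs.Rdist (homotopy p t) (homotopy q s) <=
  (Defs.Rdist p q + Rabs (t - s)) * ((nsets + 1) * (nsets + 3)).
Proof.
have ts : Rabs (1 - t - (1 - s)) = Rabs (t - s).
  by rewrite Rabs_minus_sym; congr Rabs; ring.
have N0 := nsets_ge0; have d0 := Rdist_ge0 p q; have e0 := Rabs_pos (t - s).
apply: Rdist_le => [|T]; first by apply: Rmult_le_pos; nra.
have kept_bound := kept_lipschitz p q (1 - t) (1 - s) T; rewrite ts in kept_bound.
have moved_bound : Rabs (\big[Rplus/0]_(S : {set E}) (if f S == T then moved p (1 - t) S else 0)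
    - \big[Rplus/0]_(S : {set E}) (if f S == T then moved q (1 - s) S else 0))
    <= (2 * Defs.Rdist p q + Rabs (t - s) + Defs.Rdist p q * nsets) * nsets.
  rewrite sumR_sub; apply: Rabs_sumR_le => S; case: ifP => _.
    by rewrite -ts; apply: moved_lipschitz.
  by rewrite Rminus_0_r Rabs_R0; nra.
rewrite /homotopy; move: kept_bound moved_bound.
set N := nsets in N0 *; set d := Defs.Rdist p q in d0 *; set e := Rabs (t - s) in e0 *.
set A := \big[Rplus/0]_(S : {set E}) _; set B := \big[Rplus/0]_(S : {set E}) _.
set kp := kept p _ T; set kq := kept q _ T.
have : Rabs (A + kp - (B + kq)) <= Rabs (A - B) + Rabs (kp - kq) by split_Rabs; lra.
have : 0 <= d * (N + 2) + e * (N * N + 3 * N + 2) by nra.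
nra.
Qed.

Theorem deflation_deformation_retract : deformation_retracts_onto P Q.
Proof.
exists homotopy; split; first by move=> p t Pp _; apply: homotopy_in_real.
split; first exact: homotopy0.
split; first exact: homotopy1_in_real.
split; first by move=> q t Qq _; apply: homotopy_Q.
move=> p t _ _ eps eps_gt0.
set K := (nsets + 1) * (nsets + 3).
have K_gt0 : 0 < K by have := nsets_ge0; rewrite /K; nra.
exists (eps / (2 * K)); split => [|q s _ _ pq ts]; first by apply: Rdiv_lt_0_compat; lra.
apply: Rle_lt_trans (homotopy_lipschitz p q t s) _.
have -> : eps = (eps / (2 * K) + eps / (2 * K)) * K by field; lra.
by apply: Rmult_lt_compat_r => //; lra.
Qed.

End Deflation.

Theorem lemma4 (V E : finType) (ends : E -> V * V) :
  deformation_retracts_onto (inX ends) (inC ends).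
Proof.
apply: (deflation_deformation_retract (f := core ends)).
- exact: core_sub.
- exact: core_subset.
- by move=> H /core_inC.
- exact: core_id.
- exact: inC_inX.
Qed.
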